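(* Consider single-shot measurement learning (SSML) as described in the context, with unchanged halting rule (halt when the recorded consecutive-success counter reaches $M_H$), where the recorded labels are corrupted according to either the binary-symmetric noise model or the false-negative noise model with parameter $q>0$. Then the halting time $T$ satisfies $$\mathbb{E}[T]\ge\mathbb{E}\big[X_{M_H}(1-q)\big]=\frac{1-(1-q)^{M_H}}{q(1-q)^{M_H}}.$$ In particular, for $qM_H\gg1$, $\mathbb{E}[T]\gtrsim\frac{1}{q}e^{qM_H}$.
   Context: Let $d\ge2$, $\mathcal{H}=\mathbb{C}^d$, $|\psi_\tau\rangle$ an unknown pure state available in arbitrarily many copies, $\{\hat U(\mathbf{p}):\mathbf{p}\in\mathcal{P}\subset\mathbb{R}^m\}$ a family of unitaries, $|f\rangle$ a fixed fiducial state, $F(\mathbf{p})=|\langle f|\hat U(\mathbf{p})|\psi_\tau\rangle|^2$. SSML with $\alpha,\beta>0$ and threshold $M_H\in\mathbb{N}$: at step $n$ a fresh copy is transformed by $\hat U(\mathbf{p}^{(n)})$ and measured with $\{|f\rangle\langle f|,\mathbb{1}-|f\rangle\langle f|\}$, producing a true outcome $y_n\in\{s,u\}$ with $\mathbb{P}(y_n=s\mid\text{past})=F(\mathbf{p}^{(n)})$. The controller only sees a recorded label $m_n\in\{s,u\}$. If $m_n=s$, the counter is incremented, $M_S^{(n)}=M_S^{(n-1)}+1$, and $\mathbf{p}^{(n+1)}=\mathbf{p}^{(n)}$; if $m_n=u$, $M_S^{(n)}=0$ and $\mathbf{p}^{(n+1)}=\mathbf{p}^{(n)}+\alpha(M_S^{(n-1)}+1)^{-\beta}\mathbf{r}_n$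 with $\mathbf{r}_n$ a random direction. The halting time is $T=\inf\{n\ge1:M_S^{(n)}=M_H\}$. Binary-symmetric noise (parameter $q\in(0,1/2)$): $\mathbb{P}(m_n\ne y_n)=q$, independently across steps and of all other randomness conditionally on the true label. False-negative noise (parameter $q\in(0,1)$): $\mathbb{P}(m_n=u\mid y_n=s)=q$, $\mathbb{P}(m_n=s\mid y_n=s)=1-q$, $\mathbb{P}(m_n=u\mid y_n=u)=1$, independently across steps. For $p\in(0,1)$ and $k\in\mathbb{N}$, $X_k(p)$ is the waiting time until the first occurrence of $k$ consecutive successes in an i.i.d. Bernoulli$(p)$ sequence. *)

From mathcomp Require Import all_boot all_order all_algebra.
From mathcomp Require Import all_classical all_reals all_analysis.
From mathcomp Require Import complex.
Set Implicit Arguments. Unset Strict Implicit. Unset Printing Implicit Defensive.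
Import Order.TTheory GRing.Theory Num.Theory.
Local Open Scope classical_set_scope.
Local Open Scope ring_scope.

Section Quantum.
Variable R : realType.

Definition cnorm2 (z : R[i]) : R := complex.Re z ^+ 2 + complex.Im z ^+ 2.

Definition adjmx (m n : nat) (A : 'M[R[i]]_(m, n)) : 'M[R[i]]_(n, m) :=
  (map_mx (@conjc R) A)^T.

Definition unitary (d : nat) (U : 'M[R[i]]_d) : Prop := U *m adjmx U = 1%:M.

Definition unit_state (d : nat) (v : 'cV[R[i]]_d) : Prop := adjmx v *m v = 1%:M.

Definition fidelity (d : nat) (f : 'cV[R[i]]_d) (U : 'M[R[i]]_d)
  (psi : 'cV[R[i]]_d) : R := cnorm2 ((adjmx f *m U *m psi) 0 0).
End Quantum.

(* ---------- consecutive-success counter (true = s, false = u) ---------- *)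
Definition runc (s : seq bool) : nat :=
  foldl (fun c (b : bool) => if b then c.+1 else 0%N) 0%N s.

(* M_S^(n) for the label sequence ms (labels indexed from 1) *)
Definition counter (ms : nat -> bool) (n : nat) : nat :=
  runc [seq ms i | i <- iota 1 n].

Section Halting.
Variable R : realType.
(* T = inf { n >= 1 | M_S^(n) = M_H }  (= +oo if the set is empty) *)
Definition halting_time (MH : nat) (ms : nat -> bool) : \bar R :=
  ereal_inf [set ((n%:R : R)%:E) | n in [set n | (1 <= n)%N /\ counter ms n = MH]].
End Halting.

Section Waiting.
Variable R : realType.
Definition first_hit (k : nat) (w : seq bool) : bool :=
  (runc w == k) && [forall j : 'I_(size w), runc (take j w) != k].

Definition word_prob (p : R) (n : nat) (w : n.-tuple bool) : R :=
  \prod_(i < n) (if tnth w i then p else 1 - p).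

Definition pX (k : nat) (p : R) (n : nat) : R :=
  \sum_(w : n.-tuple bool | first_hit k w) word_prob p w.

Definition EX (k : nat) (p : R) : \bar R :=
  (\sum_(n <oo) ((n%:R * pX k p n)%:E))%E.
End Waiting.

Section Filt.
Context {dsp : measure_display} {Omega : measurableType dsp}.

Definition is_filtration (G : nat -> set (set Omega)) : Prop :=
  forall n, sigma_algebra setT (G n) /\ G n `<=` measurable /\ G n `<=` G n.+1.

Definition G_measurable_fun (R : realType) (G : set (set Omega)) (f : Omega -> R) : Prop :=
  forall B : set R, measurable B -> G (f @^-1` B).
End Filt.

Section Noise.
Context {R : realType} {dsp : measure_display} {Omega : measurableType dsp}.
Variables (P : probability Omega R) (G : nat -> set (set Omega))
          (y m : nat -> Omega -> bool) (q : R).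

(* P(m_n <> y_n | past, y_n) = q *)
Definition bsc_noise : Prop :=
  forall n, (1 <= n)%N -> forall A, G n.-1 A -> forall b : bool,
    P (A `&` [set w | y n w = b] `&` [set w | m n w != y n w]) =
    (q%:E * P (A `&` [set w | y n w = b]))%E.

(* P(m_n = u | past, y_n = s) = q ,  P(m_n = u | y_n = u) = 1 *)
Definition fn_noise : Prop :=
  forall n, (1 <= n)%N ->
    (forall A, G n.-1 A ->
      P (A `&` [set w | y n w] `&` [set w | ~~ m n w]) =
      (q%:E * P (A `&` [set w | y n w]))%E) /\
    P ([set w | ~~ y n w] `&` [set w | m n w]) = 0%E.
End Noise.

(** Every recorded label is a failure with conditional probability at least [q]
    given the past: for the binary-symmetric channel because [q <= 1/2], for false
    negatives trivially.  Nothing else about the quantum model or the parameter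
    updates is used.  Let [h c = ((1-q)^-k - (1-q)^-c) / q] be the expected time a
    Bernoulli(1-q) sequence needs to complete a run of [k] successes when its
    current run has length [c]; it solves [h c = 1 + (1-q) h (c+1) + q h 0] with
    [h k = 0].  Hence [Phi n = sum_(j < n) P(T > j) + E[h (M_S^(n)); T > n]] is
    nondecreasing along the recorded labels, and constant for i.i.d. Bernoulli(1-q)
    labels.  Constancy gives [E[X_k(1-q)] = h 0], which is the closed form;
    monotonicity gives [sum_(j < n) P(T > j) >= h 0 * (1 - P(T > n))], and since
    these partial sums are bounded by [E[T]] when it is finite, [P(T > n)] gets
    small and [E[T] >= h 0]. *)

From mathcomp Require Import all_boot all_order all_algebra.
From mathcomp Require Import all_classical all_reals all_analysis.
From mathcomp Require Import complex.
From mathcomp.algebra_tactics Require Import ring lra.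
From mathcomp Require Import zify.
Set Implicit Arguments. Unset Strict Implicit. Unset Printing Implicit Defensive.
Import Order.TTheory GRing.Theory Num.Theory.
Local Open Scope classical_set_scope.
Local Open Scope ring_scope.

Lemma sum_tupleS (V : nmodType) n (F : n.+1.-tuple bool -> V) :
  \sum_(w : n.+1.-tuple bool) F w =
  \sum_(w : n.-tuple bool) (F (rcons_tuple w true) + F (rcons_tuple w false)).
Proof.
have rcons_bij : bijective (fun wb : n.-tuple bool * bool => rcons_tuple wb.1 wb.2).
  apply: inj_card_bij; last by rewrite card_prod !card_tuple card_bool expnSr.
  by move=> [w b] [w' b'] /(congr1 val)/rcons_inj [/val_inj -> ->].
rewrite (reindex _ (onW_bij _ rcons_bij)) /=.
rewrite -(pair_big xpredT xpredT (fun w b => F (rcons_tuple w b))) /=.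
by apply: eq_bigr => w _; rewrite big_bool.
Qed.

Lemma runc_rcons s b : runc (rcons s b) = if b then (runc s).+1 else 0%N.
Proof. by rewrite /runc foldl_rcons. Qed.

Lemma counterS ms n : counter ms n.+1 = if ms n.+1 then (counter ms n).+1 else 0%N.
Proof.
by rewrite /counter -[n.+1]addn1 iotaD map_cat /runc foldl_cat add1n /= addn1.
Qed.

Definition no_run k s := all (fun j => runc (take j s) != k) (iota 0 (size s).+1).

Lemma no_run_rcons k s b :
  no_run k (rcons s b) = no_run k s && (runc (rcons s b) != k).
Proof.
rewrite /no_run size_rcons -addn1 iotaD all_cat add0n all_seq1 take_oversize ?size_rcons //.
congr (_ && _); apply: eq_in_all => j; rewrite mem_iota ltnS => /andP [_ le_js].
by rewrite -cats1 takel_cat.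
Qed.

Lemma first_hit_rcons k s b :
  first_hit k (rcons s b) = no_run k s && (runc (rcons s b) == k).
Proof.
rewrite /first_hit andbC size_rcons; congr (_ && _).
apply/forallP/allP => [no_hit j|no_hit j].
  rewrite mem_iota ltnS => /andP [_ lt_js].
  by have := no_hit (Ordinal (lt_js : j < (size s).+1)%N); rewrite /= -cats1 takel_cat.
have le_js : (j <= size s)%N by rewrite -ltnS.
by rewrite -cats1 takel_cat //; apply: no_hit; rewrite mem_iota /=.
Qed.

Lemma no_run_gt0 k s : no_run k s -> (0 < k)%N.
Proof. by case/andP; rewrite take0 lt0n eq_sym. Qed.

Lemma no_run_runc_lt k s : no_run k s -> (runc s < k)%N.
Proof.
elim/last_ind: s => [|s b IH]; first exact: no_run_gt0.
rewrite no_run_rcons => /andP [/IH lt_sk]; rewrite runc_rcons.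
by case: b => //; rewrite ltn_neqAle => ->.
Qed.

Lemma exists_lt_of_sum_le (R : archiFieldType) (a : nat -> R) (C e : R) :
  0 < e -> (forall n, \sum_(j < n) a j <= C) -> exists n, a n < e.
Proof.
move=> e_gt0 sum_le; have C_ge0 : 0 <= C by have := sum_le 0%N; rewrite big_ord0.
set N := Num.bound (C / e).
have [/existsP [j lt_aj] | /existsPn small] := boolP [exists j : 'I_N, a j < e].
  by exists j.
have : N%:R * e <= C.
  rewrite mulr_natl -[in e *+ N](card_ord N) -sumr_const; apply: le_trans (sum_le N).
  by apply: ler_sum => j _; rewrite leNgt small.
have C_e_ge0 : 0 <= C / e by rewrite divr_ge0 // ltW.
by rewrite -ler_pdivlMr // leNgt archi_boundP.
Qed.

Lemma nonincreasing_sum_ge (R : numDomainType) (a : nat -> R) m n :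
  (forall j, a j.+1 <= a j) -> (n - m)%:R * a n <= \sum_(m <= j < n) a j.
Proof.
move=> a_step; rewrite mulr_natl -sumr_const_nat.
apply: ler_sum_nat => j /andP [_ /ltnW le_jn].
have ge_trans (y x z : R) : y <= x -> z <= y -> z <= x by move=> le_yx /le_trans; apply.
exact: (homo_leq (r := fun x y => y <= x) (@lexx _ _) ge_trans a_step le_jn).
Qed.

Lemma big_ord_shift_vanishing (R : pzSemiRingType) K (a u v : nat -> R) :
  (0 < K)%N -> a K = 0 -> (forall c, (c.+1 < K)%N -> u c.+1 = v c) ->
  \sum_(c < K) a c * u c = a 0 * u 0 + \sum_(c < K) a c.+1 * v c.
Proof.
case: K => // K _ aK0 uv.
rewrite big_ord_recl big_ord_recr /= aK0 mul0r addr0.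
by congr (_ + _); apply: eq_bigr => c _; rewrite -[bump 0 c]/(c.+1) uv // ltnS ltn_ord.
Qed.

Lemma sum_ltn_minn n i : (\sum_(j < n) (j < i) = minn n i)%N.
Proof.
elim: n => [|n IH]; first by rewrite big_ord0 min0n.
by rewrite big_ord_recr /= IH; case: (ltnP n i) => le_ni; lia.
Qed.

(** * The waiting time for a run of successes *)

Section RunWait.
Variables (R : numFieldType) (p : R) (k : nat).

Definition run_wait (c : nat) : R := (p^-1 ^+ k - p^-1 ^+ c) / (1 - p).

Lemma run_wait_id : run_wait k = 0.
Proof. by rewrite /run_wait subrr mul0r. Qed.

Hypotheses (p_gt0 : 0 < p) (p_lt1 : p < 1).

Let p_neq0 : p != 0. Proof. by rewrite gt_eqF. Qed.
Let subp_neq0 : 1 - p != 0. Proof. by rewrite subr_eq0 eq_sym lt_eqF. Qed.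
Let inv_ge1 : 1 <= p^-1. Proof. by rewrite invf_ge1 // ltW. Qed.

Lemma run_waitS c : run_wait c = 1 + p * run_wait c.+1 + (1 - p) * run_wait 0.
Proof. by rewrite /run_wait exprS expr0; field; rewrite subp_neq0. Qed.

Lemma run_wait0E : run_wait 0 = (1 - p ^+ k) / ((1 - p) * p ^+ k).
Proof. by rewrite /run_wait exprVn expr0; field; rewrite subp_neq0 expf_neq0. Qed.

Lemma run_wait_le_at0 c : run_wait c <= run_wait 0.
Proof.
rewrite ler_pM2r ?invr_gt0 ?subr_gt0 // expr0 lerD2l lerN2.
exact: exprn_ege1 inv_ge1.
Qed.

Lemma run_wait_ge0 c : (c <= k)%N -> 0 <= run_wait c.
Proof.
move=> le_ck; rewrite divr_ge0 ?subr_ge0 ?(ltW p_lt1) //.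
exact: ler_weXn2l inv_ge1 _ _ le_ck.
Qed.
End RunWait.

Lemma word_prob_rcons (R : realType) (p : R) n (w : n.-tuple bool) b :
  word_prob p (rcons_tuple w b) = word_prob p w * (if b then p else 1 - p).
Proof.
pose bern b := if b then p else 1 - p.
by rewrite /word_prob -(big_tuple _ _ _ xpredT bern) -(big_tuple _ _ w xpredT bern) big_rcons.
Qed.

Section RunWaitingTime.
Variables (R : realType) (p : R) (k : nat).
Hypotheses (p_gt0 : 0 < p) (p_lt1 : p < 1).
Local Notation h := (run_wait p k).
Local Notation bern b := (if b then p else 1 - p).

Definition no_run_prob n : R :=
  \sum_(w : n.-tuple bool | no_run k w) word_prob p w.

Definition no_run_wait n : R :=
  \sum_(w : n.-tuple bool | no_run k w) h (runc w) * word_prob p w.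

Lemma no_run_probS n : no_run_prob n = no_run_prob n.+1 + pX k p n.+1.
Proof.
rewrite /no_run_prob /pX big_mkcond [in RHS]big_mkcond [X in _ = _ + X]big_mkcond.
rewrite !sum_tupleS -big_split /=; apply: eq_bigr => w _.
rewrite !no_run_rcons !first_hit_rcons !runc_rcons !word_prob_rcons /=.
case: (no_run k w) => /=; last by rewrite !addr0.
by case: eqP => _; case: eqP => _ /=; ring.
Qed.

Lemma no_run_waitS n : no_run_wait n.+1 = no_run_wait n - no_run_prob n.
Proof.
rewrite /no_run_wait /no_run_prob big_mkcond [in RHS]big_mkcond [X in _ - X]big_mkcond.
rewrite -sumrB sum_tupleS /=.
apply: eq_bigr => w _; rewrite !no_run_rcons !runc_rcons !word_prob_rcons /=.
case no_run_w: (no_run k w) => /=; last by rewrite addr0 subr0.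
have [k_gt0 lt_wk] := (no_run_gt0 no_run_w, no_run_runc_lt no_run_w).
rewrite (ltn_eqF k_gt0) (run_waitS k p_gt0 p_lt1 (runc w)) /=.
by case: eqP => [<-|_] /=; rewrite ?run_wait_id; ring.
Qed.

Lemma no_run_wait0 : no_run_wait 0 = h 0.
Proof.
rewrite /no_run_wait big_mkcond (big_pred1 [tuple]) => [|w]; last first.
  by apply/esym/eqP; exact: tuple0.
rewrite /= /word_prob big_ord0 mulr1.
by case: k => [|k']; rewrite /no_run //= run_wait_id.
Qed.

Lemma word_prob_ge0 n (w : n.-tuple bool) : 0 <= word_prob p w.
Proof. by apply: prodr_ge0 => i _; case: ifP; rewrite ?subr_ge0 ltW. Qed.

Lemma pX_ge0 n : 0 <= pX k p n.
Proof. by apply: sumr_ge0 => w _; apply: word_prob_ge0. Qed.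

Lemma no_run_prob_ge0 n : 0 <= no_run_prob n.
Proof. by apply: sumr_ge0 => w _; apply: word_prob_ge0. Qed.

Lemma no_run_probS_le n : no_run_prob n.+1 <= no_run_prob n.
Proof. by rewrite (no_run_probS n) lerDl pX_ge0. Qed.

Lemma no_run_wait_ge0 n : 0 <= no_run_wait n.
Proof.
apply: sumr_ge0 => w /no_run_runc_lt /ltnW lt_wk.
by rewrite mulr_ge0 ?word_prob_ge0 ?run_wait_ge0.
Qed.

Lemma no_run_wait_le n : no_run_wait n <= h 0 * no_run_prob n.
Proof.
rewrite mulr_sumr; apply: ler_sum => w _.
by rewrite ler_wpM2r ?word_prob_ge0 ?run_wait_le_at0.
Qed.

Lemma sum_no_run_prob n : \sum_(j < n) no_run_prob j + no_run_wait n = h 0.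
Proof.
elim: n => [|n IH]; first by rewrite big_ord0 add0r no_run_wait0.
by rewrite big_ord_recr no_run_waitS /= -IH; ring.
Qed.

Lemma EX_partialE n :
  \sum_(j < n.+1) j%:R * pX k p j + n%:R * no_run_prob n = \sum_(j < n) no_run_prob j.
Proof.
elim: n => [|n IH]; first by rewrite big_ord1 big_ord0 !mul0r addr0.
by rewrite big_ord_recr [in RHS]big_ord_recr /= -IH (no_run_probS n) -natr1; ring.
Qed.

Lemma EX_partial_le n : \sum_(j < n) j%:R * pX k p j <= h 0.
Proof.
case: n => [|n]; first by rewrite big_ord0 run_wait_ge0.
have := EX_partialE n; have := sum_no_run_prob n.
have := no_run_wait_ge0 n.
have : 0 <= n%:R * no_run_prob n by rewrite mulr_ge0 ?no_run_prob_ge0.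
lra.
Qed.

(* The boundary term [2n P(no run in 2n steps)] of [EX_partialE] is at most
   [2 sum_(n <= j < 2n) P(no run in j steps)], these probabilities decreasing. *)
Lemma EX_partial_ge n :
  h 0 - 2 * no_run_wait n <= \sum_(j < n.*2.+1) j%:R * pX k p j.
Proof.
have sum_split : \sum_(0 <= j < n.*2) no_run_prob j =
    \sum_(0 <= j < n) no_run_prob j + \sum_(n <= j < n.*2) no_run_prob j.
  by apply: big_cat_nat; rewrite // -addnn leq_addr.
rewrite !big_mkord in sum_split.
have := nonincreasing_sum_ge n n.*2 no_run_probS_le; rewrite -addnn addnK addnn.
have double : (n.*2)%:R * no_run_prob n.*2 = 2 * (n%:R * no_run_prob n.*2).
  by rewrite -addnn natrD; ring.
have := EX_partialE n.*2; rewrite double.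
have := sum_no_run_prob n; have := sum_no_run_prob n.*2; have := no_run_wait_ge0 n.*2.
lra.
Qed.

Lemma sum_no_run_wait_le n : \sum_(j < n) no_run_wait j <= h 0 ^+ 2.
Proof.
apply: le_trans (_ : h 0 * \sum_(j < n) no_run_prob j <= _).
  by rewrite mulr_sumr; apply: ler_sum => j _; apply: no_run_wait_le.
rewrite expr2 ler_wpM2l ?run_wait_ge0 // -(sum_no_run_prob n) lerDl.
exact: no_run_wait_ge0.
Qed.

Lemma EX_partial_approx e : 0 < e -> exists N, h 0 - e <= \sum_(j < N) j%:R * pX k p j.
Proof.
move=> e_gt0; have [|n small] := exists_lt_of_sum_le (e := e / 2) _ sum_no_run_wait_le.
  by rewrite divr_gt0.
by exists n.*2.+1; have := EX_partial_ge n; lra.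
Qed.

Lemma EX_run_wait : EX k p = (h 0)%:E.
Proof.
have term_ge0 n : (0 <= n)%N -> true -> (0 <= (n%:R * pX k p n)%:E)%E.
  by rewrite lee_fin mulr_ge0 ?pX_ge0.
apply/eqP; rewrite eq_le; apply/andP; split.
  apply: lime_le; first exact: is_cvg_nneseries term_ge0.
  by apply: nearW => N; rewrite /= sumEFin lee_fin big_mkord EX_partial_le.
apply/lee_addgt0Pr => e e_gt0; have [N le_N] := EX_partial_approx e_gt0.
apply: le_trans (leeD2r _ (nneseries_lim_ge N term_ge0)).
by rewrite sumEFin big_mkord -EFinD lee_fin -lerBlDr.
Qed.
End RunWaitingTime.

(* A sigma-algebra [G] is the class of measurable sets of [g_sigma_algebraType G]. *)
Section SigmaAlgebraClosure.
Variables (T : pointedType) (G : set (set T)).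
Hypothesis sG : sigma_algebra setT G.

Lemma sigma_algebraT : G setT.
Proof. by rewrite -(sigma_algebra_id sG); exact: (@measurableT _ (g_sigma_algebraType G)). Qed.

Lemma sigma_algebra_setC A : G A -> G (~` A).
Proof. by rewrite -(sigma_algebra_id sG); exact: (@measurableC _ (g_sigma_algebraType G)). Qed.

Lemma sigma_algebra_setI A B : G A -> G B -> G (A `&` B).
Proof. by rewrite -(sigma_algebra_id sG); exact: (@measurableI _ (g_sigma_algebraType G)). Qed.
End SigmaAlgebraClosure.

Section FiniteMeasure.
Context d (T : measurableType d) (R : realType) (mu : {finite_measure set T -> \bar R}).

Definition pr (A : set T) : R := fine (mu A).

Lemma prE A : measurable A -> mu A = (pr A)%:E.
Proof. by move=> mA; rewrite /pr fineK ?fin_num_measure. Qed.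

Lemma pr_ge0 A : 0 <= pr A.
Proof. exact: fine_ge0. Qed.

Lemma pr_setIC A B : measurable A -> measurable B -> pr A = pr (A `&` B) + pr (A `&` ~` B).
Proof.
move=> mA mB; have mAB : measurable (A `&` B) by exact: measurableI.
have mAB' : measurable (A `&` ~` B) by apply: measurableI => //; exact: measurableC.
by apply: EFin_inj; rewrite EFinD -!prE // addeC -setDE; exact: measureDI.
Qed.

Lemma pr_partition (X : set T) (f : T -> nat) (K : nat) :
  (forall c, measurable (X `&` [set x | f x = c])) -> (forall x, X x -> (f x < K)%N) ->
  pr X = \sum_(c < K) pr (X `&` [set x | f x = c]).
Proof.
move=> mXf ltK; set F := fun c : 'I_K => X `&` [set x | f x = c].
have X_eq : X = \big[setU/set0]_(c < K) F c.
  rewrite -(bigcup_mkord K (fun c => X `&` [set x | f x = c])).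
  by apply/seteqP; split => [x Xx | x [c _ []] //]; exists (f x) => //=; exact: ltK.
have trivF : trivIset setT F.
  by move=> i j _ _ [x [[_ fi] [_ fj]]]; apply: val_inj; rewrite /= -fi -fj.
have mF c : measurable (F c) by exact: mXf.
apply: EFin_inj; rewrite [in LHS]X_eq -prE; last exact: bigsetU_measurable.
rewrite (measure_bigsetU_ord mu xpredT) //.
transitivity (\sum_(c < K) (pr (F c))%:E); first by apply: eq_bigr => c _; exact: prE.
by rewrite sumEFin.
Qed.

Lemma lee_pr_scale (c : R) A B :
  measurable A -> measurable B -> (c%:E * mu A <= mu B)%E = (c * pr A <= pr B).
Proof. by move=> mA mB; rewrite !prE // -EFinM lee_fin. Qed.

Lemma pr_scale_eq (c : R) A B :
  measurable A -> measurable B -> (c%:E * mu A)%E = mu B -> c * pr A = pr B.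
Proof. by move=> mA mB; rewrite !prE // -EFinM; exact: EFin_inj. Qed.

Lemma pr_lb_setIC (q : R) A Y M :
  measurable A -> measurable Y -> measurable M ->
  q * pr (A `&` Y) <= pr (A `&` Y `&` ~` M) ->
  q * pr (A `&` ~` Y) <= pr (A `&` ~` Y `&` ~` M) ->
  q * pr A <= pr (A `&` ~` M).
Proof.
move=> mA mY mM.
have mAM : measurable (A `&` ~` M) by apply: measurableI => //; exact: measurableC.
rewrite (pr_setIC mA mY) (pr_setIC mAM mY) !(setIAC _ (~` M)).
lra.
Qed.
End FiniteMeasure.

Lemma pr_setT d (T : measurableType d) (R : realType) (P : probability T R) : pr P setT = 1.
Proof. by change (fine (P setT) = 1); rewrite probability_setT. Qed.

(* Unlike [ge0_le_integral], no measurability is needed: both sides are suprema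
   over the simple functions below the integrand. *)
Lemma ge0_le_integralT d (T : measurableType d) (R : realType)
    (mu : {measure set T -> \bar R}) (f g : T -> \bar R) :
  (forall x, (0 <= f x)%E) -> (forall x, (f x <= g x)%E) ->
  (\int[mu]_x f x <= \int[mu]_x g x)%E.
Proof.
move=> f_ge0 le_fg; have g_ge0 x : (0 <= g x)%E := le_trans (f_ge0 x) (le_fg x).
rewrite !ge0_integralTE //; apply: ereal_sup_le => _ [s le_sf <-].
by exists s => // x; exact: le_trans (le_sf x) (le_fg x).
Qed.

Lemma le_of_partial_sums (R : realType) (I : \bar R) (h : R) (t : nat -> R) :
  (forall n, (\sum_(j < n) t j)%:E <= I)%E ->
  (forall n, h * (1 - t n) <= \sum_(j < n) t j) -> (h%:E <= I)%E.
Proof.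
move=> sum_le h_le.
case: I sum_le => [r | | ] sum_le; last 2 first.
- exact: leey.
- by have := sum_le 0%N; rewrite big_ord0.
have {}sum_le n : \sum_(j < n) t j <= r by rewrite -lee_fin.
have r_ge0 : 0 <= r by have := sum_le 0%N; rewrite big_ord0.
rewrite lee_fin; have [h_le0|h_gt0] := leP h 0; first exact: le_trans h_le0 r_ge0.
apply/ler_addgt0Pr => e e_gt0.
have [|n small] := exists_lt_of_sum_le (e := e / h) _ sum_le; first by rewrite divr_gt0.
rewrite ltr_pdivlMr // in small.
by have := h_le n; have := sum_le n; lra.
Qed.

Lemma setC_bool (T : Type) (b : T -> bool) : ~` [set x | b x] = [set x | ~~ b x].
Proof. by apply/seteqP; split => x /=; case: (b x). Qed.

Lemma setI_bool (T : Type) (b c : T -> bool) :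
  [set x | b x] `&` [set x | c x] = [set x | b x && c x].
Proof. by apply/seteqP; split => x /=; [case=> -> -> | case/andP]. Qed.

Section Filtration.
Context {dsp : measure_display} {Omega : measurableType dsp}.
Variables (G : nat -> set (set Omega)) (hG : is_filtration G).

Lemma sigma_algebra_filtration n : sigma_algebra setT (G n).
Proof. by case: (hG n). Qed.

Lemma filtration_measurable n A : G n A -> measurable A.
Proof. by case: (hG n) => _ [+ _]; apply. Qed.

Lemma filtration_le i n : (i <= n)%N -> G i `<=` G n.
Proof.
move=> /subnK <-; elim: (n - i)%N => [|j IH] //= A /IH.
by rewrite addSn; case: (hG (j + i)%N) => _ [_]; apply.
Qed.
End Filtration.

(** * Noise models *)

Definition recorded_failure_ge (R : realType) (dsp : measure_display)
    (Omega : measurableType dsp) (P : probability Omega R)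
    (G : nat -> set (set Omega)) (m : nat -> Omega -> bool) (q : R) : Prop :=
  forall n A, G n A -> (q%:E * P A <= P (A `&` ~` [set w | m n.+1 w]))%E.

Section NoiseModels.
Context (R : realType) (dsp : measure_display) (Omega : measurableType dsp).
Variables (P : probability Omega R) (G : nat -> set (set Omega)).
Variables (y m : nat -> Omega -> bool) (q : R).
Hypotheses (hG : is_filtration G).
Hypotheses (y_adapted : forall n, G n [set w | y n w]) (m_adapted : forall n, G n [set w | m n w]).

Lemma bsc_failure_ge : 0 < q < 2^-1 -> bsc_noise P G y m q -> recorded_failure_ge P G m q.
Proof.
move=> /andP [q_gt0 q_lt_half] bsc n A GA.
have flipY := bsc n.+1 isT A GA true; have flipNY := bsc n.+1 isT A GA false.
set Y := [set w | y n.+1 w] in flipY *; set M := [set w | m n.+1 w].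
have EY : A `&` Y `&` [set w | m n.+1 w != y n.+1 w] = A `&` Y `&` ~` M.
  rewrite -!setIA setC_bool !setI_bool; congr (_ `&` _).
  by apply/seteqP; split => w /=; case: (y n.+1 w); case: (m n.+1 w).
have ENY : A `&` [set w | y n.+1 w = false] = A `&` ~` Y.
  by rewrite setC_bool; congr (_ `&` _); apply/seteqP; split => w /=; case: (y n.+1 w).
have ENYM : A `&` [set w | y n.+1 w = false] `&` [set w | m n.+1 w != y n.+1 w] =
    A `&` ~` Y `&` M.
  rewrite -!setIA setC_bool setI_bool; congr (_ `&` _).
  by apply/seteqP; split => w /=; case: (y n.+1 w); case: (m n.+1 w) => //= -[].
rewrite EY in flipY; rewrite ENYM ENY in flipNY.
have [mA mY mM] : [/\ measurable A, measurable Y & measurable M].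
  by split; apply: (filtration_measurable hG); [exact: GA | exact: y_adapted | exact: m_adapted].
have mNY := measurableC mY; have mNM := measurableC mM.
have mAY := measurableI _ _ mA mY; have mANY := measurableI _ _ mA mNY.
move/esym/pr_scale_eq: flipY => /(_ mAY (measurableI _ _ mAY mNM)) flipY.
move/esym/pr_scale_eq: flipNY => /(_ mANY (measurableI _ _ mANY mM)) flipNY.
rewrite lee_pr_scale //; last exact: measurableI.
apply: (@pr_lb_setIC _ _ _ P q A Y M) => //; first by rewrite flipY.
have := pr_setIC P mANY mM; rewrite -flipNY => split_NY.
have : 0 <= (1 - 2 * q) * pr P (A `&` ~` Y) by rewrite mulr_ge0 ?pr_ge0 //; lra.
lra.
Qed.

Lemma fn_failure_ge : 0 < q < 1 -> fn_noise P G y m q -> recorded_failure_ge P G m q.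
Proof.
move=> /andP [q_gt0 q_lt1] fn n A GA; have [missY spurious] := fn n.+1 isT.
have {missY}missY := missY A GA.
set Y := [set w | y n.+1 w] in missY *; set M := [set w | m n.+1 w].
rewrite -setC_bool -/M in missY; rewrite -setC_bool -/Y -/M in spurious.
have [mA mY mM] : [/\ measurable A, measurable Y & measurable M].
  by split; apply: (filtration_measurable hG); [exact: GA | exact: y_adapted | exact: m_adapted].
have mAY := measurableI _ _ mA mY; have mANY := measurableI _ _ mA (measurableC mY).
move/esym/pr_scale_eq: missY => /(_ mAY (measurableI _ _ mAY (measurableC mM))) missY.
have no_spurious : pr P (A `&` ~` Y `&` M) = 0.
  have mANYM := measurableI _ _ mANY mM.
  have mNYM : measurable (~` Y `&` M) by exact: measurableI (measurableC mY) mM.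
  have : (P (A `&` ~` Y `&` M) <= P (~` Y `&` M))%E.
    by rewrite le_measure ?inE // -setIA; apply: subIsetr.
  by rewrite spurious prE // lee_fin => le0; apply/eqP; rewrite eq_le le0 pr_ge0.
rewrite lee_pr_scale //; last exact: measurableI mA (measurableC mM).
apply: (@pr_lb_setIC _ _ _ P q A Y M) => //; first by rewrite missY.
rewrite (pr_setIC P mANY mM) no_spurious add0r ler_piMl ?pr_ge0 //.
exact: ltW.
Qed.
End NoiseModels.

(** * The halting time *)

Section HaltingTime.
Context (R : realType) (dsp : measure_display) (Omega : measurableType dsp).
Variables (P : probability Omega R) (G : nat -> set (set Omega)).
Variables (m : nat -> Omega -> bool) (q : R) (k : nat).
Hypotheses (hG : is_filtration G) (m_adapted : forall n, G n [set w | m n w]).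
Hypotheses (q_gt0 : 0 < q) (q_lt1 : q < 1) (k_gt0 : (0 < k)%N).
Hypothesis failure_ge : recorded_failure_ge P G m q.

Local Notation C n w := (counter (m^~ w) n).
Local Notation M n := [set w | m n w].
Local Notation h := (run_wait (1 - q) k).

Let p_gt0 : 0 < 1 - q. Proof. by rewrite subr_gt0. Qed.
Let p_lt1 : 1 - q < 1. Proof. by rewrite ltrBlDr ltrDl. Qed.
Let sG n : sigma_algebra setT (G n) := sigma_algebra_filtration hG n.

(* [running n] is the event [T > n]. *)
Definition running n := [set w | forall i, (1 <= i <= n)%N -> C i w != k].
Definition run_state n c := running n `&` [set w | C n w = c].

Lemma G_counter_eq n c : G n [set w | C n w = c].
Proof.
elim: n c => [|n IH] [|c].
- rewrite (_ : [set w | _] = setT); first exact: sigma_algebraT (sG 0%N).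
  by apply/seteqP; split => w.
- rewrite (_ : [set w | _] = set0); first by case: (sG 0%N).
  by apply/seteqP; split => w.
- rewrite (_ : [set w | _] = ~` M n.+1).
    exact: sigma_algebra_setC (sG _) _ (m_adapted _).
  by apply/seteqP; split => w /=; rewrite counterS; case: (m n.+1 w).
rewrite (_ : [set w | _] = [set w | C n w = c] `&` M n.+1).
  apply: sigma_algebra_setI (sG _) _ _ _ (m_adapted _).
  exact: (filtration_le hG (leqnSn n) (IH c)).
apply/seteqP; split => w /=; rewrite counterS; last by case=> -> ->.
by case: (m n.+1 w) => // -[->].
Qed.

Lemma running0 : running 0 = setT.
Proof. by apply/seteqP; split => // w _ i /andP [i_ge1 /(leq_trans i_ge1)]. Qed.

Lemma runningS n : running n.+1 = running n `&` ~` [set w | C n.+1 w = k].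
Proof.
apply/seteqP; split => w /=.
  move=> run_w; split => [i /andP [i_ge1 le_in]|]; last by apply/eqP; rewrite run_w /=.
  by rewrite run_w // i_ge1 (leq_trans le_in).
move=> [run_w /eqP neq_k] i /andP [i_ge1]; rewrite leq_eqVlt => /orP [/eqP -> //|].
by rewrite ltnS => le_in; rewrite run_w // i_ge1.
Qed.

Lemma G_running n : G n (running n).
Proof.
elim: n => [|n IH]; first by rewrite running0; exact: sigma_algebraT (sG 0).
rewrite runningS; apply: sigma_algebra_setI (sG _) _ _ _ _.
  exact: (filtration_le hG (leqnSn n) IH).
exact/(sigma_algebra_setC (sG _))/G_counter_eq.
Qed.

Lemma G_run_state n c : G n (run_state n c).
Proof. exact: sigma_algebra_setI (sG n) _ _ (G_running n) (G_counter_eq n c). Qed.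

Lemma running_counter_lt n w : running n w -> (C n w < k)%N.
Proof.
elim: n => [|n IH]; first by rewrite /counter.
rewrite runningS => -[/IH lt_k /eqP]; rewrite counterS.
by case: (m n.+1 w) => // neq_k; rewrite ltn_neqAle neq_k.
Qed.

Lemma run_stateS0 n : run_state n.+1 0 = running n `&` ~` M n.+1.
Proof.
rewrite /run_state runningS; apply/seteqP; split => w /=; rewrite counterS.
  by case: (m n.+1 w) => [[_ /eqP //] | [[run_w _] _]].
case: (m n.+1 w) => -[run_w not_m]; first by case: not_m.
by do !split => //; apply/eqP; rewrite eq_sym -lt0n.
Qed.

Lemma run_stateSS n c : (c.+1 < k)%N -> run_state n.+1 c.+1 = run_state n c `&` M n.+1.
Proof.
move=> lt_ck; rewrite /run_state runningS; apply/seteqP; split => w /=; rewrite counterS.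
  by case: (m n.+1 w) => [[[run_w _] [<-]] | [_ /eqP //]].
move=> [[run_w C_eq] m_w]; rewrite m_w C_eq; do !split => //.
by move=> eq_k; rewrite eq_k ltnn in lt_ck.
Qed.

Lemma measurable_run_state n c : measurable (run_state n c).
Proof. exact (filtration_measurable hG (G_run_state n c)). Qed.

Lemma pr_running n : pr P (running n) = \sum_(c < k) pr P (run_state n c).
Proof. exact (pr_partition P (measurable_run_state n) (@running_counter_lt n)). Qed.

Lemma pr_running_fail n :
  pr P (running n `&` ~` M n.+1) = \sum_(c < k) pr P (run_state n c `&` ~` M n.+1).
Proof.
have mNM : measurable (~` M n.+1) by apply/measurableC/(filtration_measurable hG)/m_adapted.
rewrite (@pr_partition _ _ _ P _ (fun w => C n w) k) => [|c|w [/running_counter_lt //]].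
  by apply: eq_bigr => c _; rewrite setIAC.
by rewrite setIAC; apply: measurableI mNM; exact: measurable_run_state.
Qed.

Definition potential n :=
  \sum_(j < n) pr P (running j) + \sum_(c < k) h c * pr P (run_state n c).

Lemma potential0 : potential 0 = h 0.
Proof.
rewrite /potential big_ord0 add0r (bigD1 (Ordinal k_gt0)) //= big1 => [|c c_neq0].
  rewrite /run_state running0 setTI (_ : [set w | _] = setT); last by apply/seteqP.
  by rewrite pr_setT mulr1 addr0.
rewrite /run_state running0 setTI (_ : [set w | _] = set0) ?/pr ?measure0 ?mulr0 //.
by apply/seteqP; split => // w /= c0; move: c_neq0; rewrite -val_eqE /= -c0.
Qed.

Lemma potential_le n : potential n <= potential n.+1.
Proof.
have mM : measurable (M n.+1) by apply: (filtration_measurable hG); exact: m_adapted.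
pose U c := pr P (run_state n c).
pose V c := pr P (run_state n c `&` M n.+1); pose W c := pr P (run_state n c `&` ~` M n.+1).
have U_split c : U c = V c + W c := pr_setIC P (measurable_run_state n c) mM.
have W_ge c : q * U c <= W c.
  rewrite -lee_pr_scale; first exact/failure_ge/G_run_state.
    exact: measurable_run_state.
  by apply: measurableI (measurable_run_state n c) (measurableC mM).
have next : \sum_(c < k) h c * pr P (run_state n.+1 c) =
    h 0 * \sum_(c < k) W c + \sum_(c < k) h c.+1 * V c.
  pose u c := pr P (run_state n.+1 c).
  rewrite (big_ord_shift_vanishing (a := h) (u := u) (v := V)) ?run_wait_id // => [|c lt_ck].
    by rewrite /u run_stateS0 pr_running_fail.
  by rewrite /u run_stateSS.
rewrite /potential big_ord_recr /= next -addrA lerD2l (pr_running n) mulr_sumr -!big_split /=.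
apply: ler_sum => c _; rewrite -/(U c) U_split (run_waitS k p_gt0 p_lt1 c).
have h_le := run_wait_le_at0 k p_gt0 p_lt1 c.+1.
have := W_ge c; rewrite U_split => W_ge'.
have : 0 <= (h 0 - h c.+1) * (W c - q * (V c + W c)) by rewrite mulr_ge0 // subr_ge0.
lra.
Qed.

Lemma running_sum_ge n : h 0 * (1 - pr P (running n)) <= \sum_(j < n) pr P (running j).
Proof.
have : h 0 <= potential n.
  elim: n => [|n IH]; first by rewrite potential0.
  exact: le_trans IH (potential_le n).
have : \sum_(c < k) h c * pr P (run_state n c) <= h 0 * pr P (running n).
  rewrite pr_running mulr_sumr; apply: ler_sum => c _.
  by rewrite ler_wpM2r ?pr_ge0 ?run_wait_le_at0.
rewrite /potential; lra.
Qed.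

Lemma halting_time_ge w n :
  ((\sum_(j < n) (\1_(running j) w : R))%:E <= halting_time R k (m^~ w))%E.
Proof.
apply/ereal_infP => _ [i [i_ge1 C_eq] <-]; rewrite lee_fin.
apply: (@le_trans _ _ (\sum_(j < n) ((j < i)%N)%:R)).
  apply: ler_sum => j _; rewrite indicE; case: ltnP => [_|le_ij].
    by rewrite ler_nat leq_b1.
  rewrite memNset //= => run_j.
  by have := run_j i; rewrite i_ge1 le_ij C_eq eqxx => /(_ isT).
by rewrite -natr_sum ler_nat sum_ltn_minn geq_minr.
Qed.

Lemma integral_halting_time_ge n :
  ((\sum_(j < n) pr P (running j))%:E <= \int[P]_w halting_time R k (m^~ w))%E.
Proof.
have mrun j : measurable (running j) by exact: (filtration_measurable hG (G_running j)).
apply: le_trans (ge0_le_integralT _ _ (halting_time_ge ^~ n)); last first.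
  by move=> w; rewrite lee_fin sumr_ge0 // => j _; rewrite indicE.
rewrite (eq_integral (fun w => \sum_(j < n) (\1_(running j) w : R)%:E)); last first.
  by move=> w _; rewrite sumEFin.
rewrite ge0_integral_sum //; last first.
  move=> j; apply/measurable_realfun.measurable_EFinP.
  exact: measurable_realfun.measurable_indic.
rewrite -sumEFin; apply: lee_sum => j _.
by rewrite integral_indic // setIT -prE.
Qed.
End HaltingTime.

Lemma mean_halting_time_ge (R : realType) (dsp : measure_display)
    (Omega : measurableType dsp) (P : probability Omega R) (G : nat -> set (set Omega))
    (m : nat -> Omega -> bool) (q : R) (k : nat) :
  is_filtration G -> (forall n, G n [set w | m n w]) -> 0 < q -> q < 1 ->
  recorded_failure_ge P G m q ->
  ((run_wait (1 - q) k 0)%:E <= \int[P]_w halting_time R k (m^~ w))%E.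
Proof.
move=> hG m_adapted q_gt0 q_lt1 failure_ge.
case: (posnP k) => [->|k_gt0].
  rewrite run_wait_id; apply: integral_ge0 => w _.
  by apply/ereal_infP => _ [i _ <-]; rewrite lee_fin.
apply: (@le_of_partial_sums _ _ _ (fun j => pr P (running m k j))) => n.
  exact: integral_halting_time_ge.
exact: running_sum_ge.
Qed.

Theorem theorem4
  (R : realType) (dsp : measure_display) (Omega : measurableType dsp)
  (P : probability Omega R)
  (d : nat) (hd : (2 <= d)%N)
  (psi f : 'cV[R[i]]_d) (hpsi : unit_state psi) (hf : unit_state f)
  (dm : nat) (U : 'rV[R]_dm -> 'M[R[i]]_d) (hU : forall p, unitary (U p))
  (alpha beta : R) (halpha : 0 < alpha) (hbeta : 0 < beta)
  (MH : nat) (q : R)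
  (G : nat -> set (set Omega)) (hG : is_filtration G)
  (p : nat -> Omega -> 'rV[R]_dm) (r : nat -> Omega -> 'rV[R]_dm)
  (y mlab : nat -> Omega -> bool) (p1 : 'rV[R]_dm)
  (* adaptedness: y_n, m_n, r_n are known at the end of step n *)
  (hy_ad : forall n, G n [set w | y n w])
  (hm_ad : forall n, G n [set w | mlab n w])
  (hr_ad : forall n (j : 'I_dm), G_measurable_fun (G n) (fun w => r n w 0 j))
  (* r_n is a direction (unit vector) *)
  (hr_unit : forall n w, \sum_(j < dm) (r n w 0 j) ^+ 2 = 1)
  (* SSML parameter dynamics *)
  (hp1 : forall w, p 1%N w = p1)
  (hp_step : forall n w, (1 <= n)%N ->
     p n.+1 w = if mlab n w then p n w
                else p n w + (alpha * (((counter (fun i => mlab i w) n.-1).+1)%:R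
                                         `^ (- beta))) *: r n w)
  (* true outcome: P(y_n = s | past) = F(p^(n)) *)
  (hy_law : forall n, (1 <= n)%N -> forall A, G n.-1 A ->
     P (A `&` [set w | y n w]) =
     (\int[P]_(w in A) (fidelity f (U (p n w)) psi)%:E)%E)
  (* noise model on the recorded labels *)
  (hnoise : (0 < q < 2^-1 /\ bsc_noise P G y mlab q) \/
            (0 < q < 1 /\ fn_noise P G y mlab q)) :
  ((\int[P]_w (halting_time R MH (fun n => mlab n w)) >= EX MH (1 - q)) /\
   EX MH (1 - q) = ((1 - (1 - q) ^+ MH) / (q * (1 - q) ^+ MH))%:E)%E.
Proof.
have [q_gt0 q_lt1] : 0 < q /\ q < 1.
  by case: hnoise => -[/andP [q_gt0 q_lt]] _; split => //; lra.
have failure_ge : recorded_failure_ge P G mlab q.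
  case: hnoise => -[q_range noise].
    exact: bsc_failure_ge hG hy_ad hm_ad q_range noise.
  exact: fn_failure_ge hG hy_ad hm_ad q_range noise.
have [p_gt0 p_lt1] : 0 < 1 - q /\ 1 - q < 1 by split; lra.
rewrite EX_run_wait //; split; first exact: mean_halting_time_ge.
by rewrite run_wait0E // (_ : 1 - (1 - q) = q) //; ring.
Qed.
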